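(* Let $\mathcal O$ be a non-degenerate conic of $\mathrm{PG}(2,q^2)$, and $[\mathcal O]=\mathcal Q_\infty\cap\mathcal Q_0$ in $\mathrm{PG}(4,q)$, $[\mathcal O]^\star=\mathcal Q_\infty^\star\cap\mathcal Q_0^\star$ in $\mathrm{PG}(4,q^2)$, $[\mathcal O]^{\star\star}=\mathcal Q_\infty^{\star\star}\cap\mathcal Q_0^{\star\star}$ in $\mathrm{PG}(4,q^4)$. (1) If $\mathcal O\cap\ell_\infty=\{\bar P,\bar Q\}$ with $\bar P\ne\bar Q$, then $[\mathcal O]\cap\Sigma_\infty=[P]\cup[Q]$; $[\mathcal O]^\star\cap\Sigma_\infty^\star=[P]^\star\cup[Q]^\star\cup PQ^q\cup P^qQ$; and $[\mathcal O]^{\star\star}\cap\Sigma_\infty^{\star\star}=[P]^{\star\star}\cup[Q]^{\star\star}\cup(PQ^q)^{\star\star}\cup(P^qQ)^{\star\star}$. (2) If $\mathcal O\cap\ell_\infty=\{\bar P\}$ ($\ell_\infty$ tangent), then $[\mathcal O]\cap\Sigma_\infty=[P]$, $[\mathcal O]^\star\cap\Sigma_\infty^\star=[P]^\star$ and $[\mathcal O]^{\star\star}\cap\Sigma_\infty^{\star\star}=[P]^{\star\star}$. (3) If $\mathcal O\cap\ell_\infty=\emptyset$, so that the extensions of $\mathcal O$ and $\ell_\infty$ to $\mathrm{PG}(2,q^4)$ meet in two points $\bar P,\bar P^{q^2}$, then $[\mathcal O]\cap\Sigma_\infty=\emptyset$, $[\mathcal O]^\star\cap\Sigma_\infty^\star=\emptyset$,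 and $[\mathcal O]^{\star\star}\cap\Sigma_\infty^{\star\star}=\ell_P\cup\ell_P^q\cup\ell_P^{q^2}\cup\ell_P^{q^3}$, where $\ell_P=PP^q$.
   Context: Coordinates: $q$ a prime power; $\tau$ is a primitive element of $\mathbb F_{q^2}$ with minimal polynomial $x^2-t_1x-t_0$ over $\mathbb F_q$. $\mathrm{PG}(2,q^2)$ has coordinates $(x,y,z)$, $\ell_\infty: z=0$; $\mathrm{PG}(4,q)$ has coordinates $(x_0,x_1,y_0,y_1,z)$ and $\Sigma_\infty: z=0$. The Bruck–Bose map sends the affine point $(x_0+x_1\tau,y_0+y_1\tau,z)$ ($x_i,y_i,z\in\mathbb F_q$, $z\ne0$) to $(x_0,x_1,y_0,y_1,z)$, and $\bar T=(\delta,1,0)\in\ell_\infty$, $\delta=d_0+d_1\tau$, to the spread line $[T]=\langle(d_0,d_1,1,0,0),(t_0d_1,d_0+t_1d_1,0,1,0)\rangle$ (and $(1,0,0)$ to $\langle(1,0,0,0,0),(0,1,0,0,0)\rangle$); these form a regular spread $\mathcal S$ of $\Sigma_\infty$. With $A_0=(\tau^q,-1,0,0,0)$, $A_1=(0,0,\tau^q,-1,0)$, the transversals of $\mathcal S$ in $\mathrm{PG}(4,q^2)$ are $g=\langle A_0,A_1\rangle$, $g^q=\langle A_0^q,A_1^q\rangle$, where $X\mapsto X^q$ raises coordinates to the $q$-th power. For $\alpha\in\mathbb F_{q^4}\cup\{\infty\}$ the point $\bar P=(\alpha,1,0)$ of (the extension to $\mathrm{PG}(2,q^4)$ of) $\ell_\infty$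 corresponds to $P=\alpha A_0+A_1$ ($P=A_0$ if $\alpha=\infty$) on the extension of $g$; for $\bar P\in\ell_\infty$ one has $[P]^\star=PP^q$. If $\mathcal O$ has equation $f(x,y,z)=0$ over $\mathbb F_{q^2}$, substituting $x=x_0+x_1\tau$, $y=y_0+y_1\tau$ and reducing with $\tau^2=t_1\tau+t_0$ gives $f=f_\infty+\tau f_0$ with $f_\infty,f_0$ homogeneous quadratics over $\mathbb F_q$ in $(x_0,x_1,y_0,y_1,z)$; $\mathcal Q_\infty,\mathcal Q_0$ are the quadrics $f_\infty=0$, $f_0=0$. For any set $\mathcal V$ defined by equations over $\mathbb F_q$ (quadric, subspace), $\mathcal V^\star$, $\mathcal V^{\star\star}$ are the sets of points of $\mathrm{PG}(4,q^2)$, $\mathrm{PG}(4,q^4)$ satisfying the same equations; for a line $\ell$ of $\mathrm{PG}(4,q^2)$, $\ell^{\star\star}$ is its extension to $\mathrm{PG}(4,q^4)$. *)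

From HB Require Import structures.
From mathcomp Require Import all_boot all_order all_algebra all_field.
Set Implicit Arguments. Unset Strict Implicit. Unset Printing Implicit Defensive.
Import Order.TTheory GRing.Theory.
Local Open Scope ring_scope.

(* Standing setup: everything lives in a finite field L with #|L| = q^4,
   i.e. L = F_{q^4}.  The subfield F_{q^k} (k | 4) is {x | x^(q^k) = x}. *)
Section BB.
Variables (L : finFieldType) (q : nat).

Definition inF (k : nat) (x : L) : Prop := x ^+ (q ^ k) = x.

Definition frobv (n k : nat) (v : 'I_n -> L) : 'I_n -> L := fun i => v i ^+ (q ^ k).

(* A point of PG(n-1, q^k): nonzero vector with coordinates in F_{q^k}.
   Point sets below are homogeneous predicates on such vectors. *)
Definition ptPG (n k : nat) (v : 'I_n -> L) : Prop :=
  (exists i, v i != 0) /\ forall i, inF k (v i).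

(* v lies on the line spanned by u and w (the span over L; restricted to
   F_{q^k}-points this is the point set of the line (or of its extension)
   in PG(4,q^k) when u,w are defined over F_{q^k}). *)
Definition on_line (n : nat) (u w v : 'I_n -> L) : Prop :=
  exists l m : L, forall i, v i = l * u i + m * w i.

(* Homogeneous quadratic form in n variables given by its coefficients
   A i j for i <= j (entries with i > j are ignored):
   sum_{i <= j} A i j v_i v_j. *)
Definition qeval (n : nat) (A : 'I_n -> 'I_n -> L) (v : 'I_n -> L) : L :=
  \sum_(i < n) \sum_(j < n | (i <= j)%N) A i j * v i * v j.

(* Coefficient table of the form v |-> f(S v), where f has table A (in m
   variables) and S : m x n matrix (linear substitution x = S v). *)
Definition qsubst (m n : nat) (A : 'I_m -> 'I_m -> L) (S : 'I_m -> 'I_n -> L)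
  (k l : 'I_n) : L :=
  if (k < l)%N then
    \sum_(i < m) \sum_(j < m | (i <= j)%N) A i j * (S i k * S j l + S i l * S j k)
  else if k == l then
    \sum_(i < m) \sum_(j < m | (i <= j)%N) A i j * (S i k * S j k)
  else 0.

Variable tau : L.

(* The Bruck--Bose substitution x = x0 + x1 tau, y = y0 + y1 tau, z = z,
   variables ordered (x0,x1,y0,y1,z). *)
Definition BBsubst (i : 'I_3) (k : 'I_5) : L :=
  match nat_of_ord i, nat_of_ord k with
  | 0, 0 => 1 | 0, 1 => tau | 1, 2 => 1 | 1, 3 => tau | 2, 4 => 1
  | _, _ => 0 end.

(* For c in F_{q^2}, c = reF c + tau * imF c with reF c, imF c in F_q
   (coordinates of c in the F_q-basis {1, tau}). *)
Definition reF (c : L) : L := (tau * c ^+ q - tau ^+ q * c) / (tau - tau ^+ q).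
Definition imF (c : L) : L := (c - c ^+ q) / (tau - tau ^+ q).

(* f = f_inf + tau f_0 : coefficient tables of f_inf and f_0. *)
Definition finf (A : 'I_3 -> 'I_3 -> L) (k l : 'I_5) : L :=
  reF (qsubst A BBsubst k l).
Definition f0 (A : 'I_3 -> 'I_3 -> L) (k l : 'I_5) : L :=
  imF (qsubst A BBsubst k l).

Definition inBBO (A : 'I_3 -> 'I_3 -> L) (v : 'I_5 -> L) : Prop :=
  qeval (finf A) v = 0 /\ qeval (f0 A) v = 0.

Definition cz : 'I_5 := @Ordinal 5 4 erefl.
Definition inSigmaInf (v : 'I_5 -> L) : Prop := v cz = 0.

(* Points of ell_inf (extended): Some d is (d,1,0), None is (1,0,0). *)
Definition linf_pt (a : option L) (i : 'I_3) : L :=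
  match a with
  | Some d => match nat_of_ord i with 0 => d | 1 => 1 | _ => 0 end
  | None => match nat_of_ord i with 0 => 1 | _ => 0 end
  end.
Definition opt_inF (k : nat) (a : option L) : Prop :=
  match a with Some d => inF k d | None => True end.

Definition onO (A : 'I_3 -> 'I_3 -> L) (a : option L) : Prop :=
  qeval A (linf_pt a) = 0.

Variables (t0 t1 : L).

Definition spread_u (a : option L) (i : 'I_5) : L :=
  match a with
  | Some d => match nat_of_ord i with 0 => reF d | 1 => imF d | 2 => 1 | _ => 0 end
  | None => match nat_of_ord i with 0 => 1 | _ => 0 end
  end.
Definition spread_w (a : option L) (i : 'I_5) : L :=
  match a with
  | Some d => match nat_of_ord i with
              | 0 => t0 * imF d | 1 => reF d + t1 * imF d | 3 => 1 | _ => 0 end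
  | None => match nat_of_ord i with 1 => 1 | _ => 0 end
  end.
Definition on_spread (a : option L) (v : 'I_5 -> L) : Prop :=
  on_line (spread_u a) (spread_w a) v.

(* Transversal g = <A0, A1>; the point of g corresponding to a. *)
Definition A0 (i : 'I_5) : L :=
  match nat_of_ord i with 0 => tau ^+ q | 1 => -1 | _ => 0 end.
Definition A1 (i : 'I_5) : L :=
  match nat_of_ord i with 2 => tau ^+ q | 3 => -1 | _ => 0 end.
Definition gpt (a : option L) (i : 'I_5) : L :=
  match a with Some al => al * A0 i + A1 i | None => A0 i end.

End BB.

Definition c00 : 'I_3 := @Ordinal 3 0 erefl.
Definition c11 : 'I_3 := @Ordinal 3 1 erefl.
Definition c22 : 'I_3 := @Ordinal 3 2 erefl.

(* Non-degeneracy of the conic a x^2 + b y^2 + c z^2 + d xy + e xz + g yz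
   (valid in every characteristic): 4abc + deg - a g^2 - b e^2 - c d^2 != 0. *)
Definition nondeg_conic (L : fieldType) (A : 'I_3 -> 'I_3 -> L) : Prop :=
  let a := A c00 c00 in let b := A c11 c11 in let c := A c22 c22 in
  let d := A c00 c11 in let e := A c00 c22 in let g := A c11 c22 in
  4 * a * b * c + d * e * g - a * g ^+ 2 - b * e ^+ 2 - c * d ^+ 2 != 0.

From HB Require Import structures.
From mathcomp Require Import all_boot all_order all_algebra all_field.
From mathcomp Require Import ring zify.
Import GRing.Theory.
Local Open Scope ring_scope.
Set Implicit Arguments. Unset Strict Implicit. Unset Printing Implicit Defensive.

(* On Sigma_inf (z = 0) use the coordinates X = x0 + tau x1, Y = y0 + tau y1
   and X' = x0 + tau^q x1, Y' = y0 + tau^q y1; as tau != tau^q this is an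
   invertible change of coordinates, in which the transversal g is
   X' = Y' = 0 and g^q is X = Y = 0.  Writing g(X, Y) = f(X, Y, 0) for the
   restriction of O to ell_inf, f = f_inf + tau f_0 gives (inBBOE)
       [O] cap Sigma_inf :  g(X, Y) = 0  and  g^q(X', Y') = 0.
   Every line we meet is cut out by one linear condition on (X, Y) and one on
   (X', Y'): the spread line [R] by "R at (X, Y), R^q at (X', Y')" and the
   line joining R1 in g to R2^q in g^q by "R1 at (X, Y), R2^q at (X', Y')".
   Hence factoring g = c l_R1 l_R2 into linear forms over its two roots
   (sigma_inf_factor) shows that [O] cap Sigma_inf is the union of four such
   lines.  The three cases differ in the roots: {P, Q} (two F_{q^2}-points),
   {P, P} (tangency) and {P, P^(q^2)} (conjugate points of F_{q^4}); points
   with coordinates in a subfield are then sorted out by Frobenius arguments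
   (cross_line_Fq, anisotropic_points). *)

Section BinaryForms.
Variable K : fieldType.

Definition binform (a d b X Y : K) : K := a * X ^+ 2 + d * X * Y + b * Y ^+ 2.

Definition px (R : option K) : K := if R is Some p then p else 1.
Definition py (R : option K) : K := if R is Some _ then 1 else 0.

Definition linform (R : option K) (X Y : K) : K := X * py R - px R * Y.

Definition fixedpt (phi : {rmorphism K -> K}) (R : option K) : Prop :=
  if R is Some x then phi x = x else True.

Lemma linformZ R l X Y : linform R (l * X) (l * Y) = l * linform R X Y.
Proof. by rewrite /linform; ring. Qed.

Lemma linform_self R : linform R (px R) (py R) = 0.
Proof. by rewrite /linform mulrC subrr. Qed.

Lemma linform_eq0_span R X Y :
  linform R X Y = 0 <-> exists l, X = l * px R /\ Y = l * py R.
Proof.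
split=> [|[l [-> ->]]]; last by rewrite linformZ linform_self mulr0.
case: R => [p|] /=; rewrite /linform /=.
  by rewrite mulr1 => /eqP; rewrite subr_eq0 => /eqP ->; exists Y; rewrite mulr1 mulrC.
by rewrite mulr0 mul1r sub0r => /eqP; rewrite oppr_eq0 => /eqP ->; exists X; rewrite mulr1 mulr0.
Qed.

Lemma linform_pt_eq0 R R' : linform R (px R') (py R') = 0 -> R' = R.
Proof.
rewrite /linform; case: R => [p|]; case: R' => [r|] //=; rewrite ?mulr1 ?mulr0 ?mul1r.
- by move/eqP; rewrite subr_eq0 => /eqP ->.
- by move/eqP; rewrite subr0 oner_eq0.
- by move/eqP; rewrite sub0r oppr_eq0 oner_eq0.
Qed.

Lemma linform_zero2 R1 R2 X Y : R1 <> R2 ->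
  linform R1 X Y = 0 -> linform R2 X Y = 0 -> X = 0 /\ Y = 0.
Proof.
move=> R12 /linform_eq0_span [l [-> ->]]; rewrite linformZ => /eqP.
rewrite mulf_eq0 => /orP[/eqP ->|/eqP/linform_pt_eq0 //]; by rewrite !mul0r.
Qed.

Lemma factor_eq0 a d b c R1 R2 X Y : c != 0 ->
  (forall X Y, binform a d b X Y = c * linform R1 X Y * linform R2 X Y) ->
  (binform a d b X Y = 0 <-> linform R1 X Y = 0 \/ linform R2 X Y = 0).
Proof.
move=> c_neq0 gE; rewrite gE; split; last by case=> ->; rewrite ?mulr0 ?mul0r.
by move/eqP; rewrite !mulf_eq0 (negbTE c_neq0) /= => /orP[] /eqP; [left|right].
Qed.

Lemma factor_finite_roots a d b p r : p != r ->
  binform a d b p 1 = 0 -> binform a d b r 1 = 0 ->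
  forall X Y, binform a d b X Y = a * linform (Some p) X Y * linform (Some r) X Y.
Proof.
move=> pr gp gr.
have sum_roots : a * (p + r) + d = 0.
  have : (p - r) * (a * (p + r) + d) = binform a d b p 1 - binform a d b r 1.
    by rewrite /binform; ring.
  rewrite gp gr subrr => /eqP; rewrite mulf_eq0 subr_eq0 (negbTE pr) /=.
  by move/eqP.
move=> X Y; apply/eqP; rewrite -subr_eq0.
have -> : binform a d b X Y - a * linform (Some p) X Y * linform (Some r) X Y =
  (a * (p + r) + d) * (X * Y) + (binform a d b p 1 - p * (a * (p + r) + d)) * Y ^+ 2.
  by rewrite /binform /linform /=; ring.
by rewrite sum_roots gp mulr0 subrr !mul0r addr0.
Qed.

Lemma factor_root_infinity a d b p :
  binform a d b p 1 = 0 -> binform a d b 1 0 = 0 ->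
  forall X Y, binform a d b X Y = - d * linform (Some p) X Y * linform None X Y.
Proof.
move=> gp ginf X Y; apply/eqP; rewrite -subr_eq0.
have -> : binform a d b X Y - - d * linform (Some p) X Y * linform None X Y =
  binform a d b 1 0 * X ^+ 2 + (binform a d b p 1 - p ^+ 2 * binform a d b 1 0) * Y ^+ 2.
  by rewrite /binform /linform /=; ring.
by rewrite gp ginf mulr0 subrr !mul0r addr0.
Qed.

Lemma factor_two_roots a d b R1 R2 : R1 <> R2 ->
  binform a d b (px R1) (py R1) = 0 -> binform a d b (px R2) (py R2) = 0 ->
  exists c, forall X Y, binform a d b X Y = c * linform R1 X Y * linform R2 X Y.
Proof.
case: R1 => [p|]; case: R2 => [r|] //= R12 g1 g2.
- by exists a; apply: factor_finite_roots => //; apply: contra_notN R12 => /eqP ->.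
- by exists (- d); apply: factor_root_infinity.
- exists (- d) => X Y; rewrite (factor_root_infinity g2 g1); ring.
Qed.

Lemma factor_at_root (phi : {rmorphism K -> K}) a d b R :
  phi a = a -> phi d = d -> phi b = b -> fixedpt phi R ->
  binform a d b (px R) (py R) = 0 ->
  exists c R', fixedpt phi R' /\
    forall X Y, binform a d b X Y = c * linform R X Y * linform R' X Y.
Proof.
move=> fa fd fb fR gR.
have [u [v [fu fv gE]]] : exists u v, [/\ phi u = u, phi v = v &
    forall X Y, binform a d b X Y = linform R X Y * (u * X + v * Y)].
  case: R fR gR => [p|] /= fp gp.
    exists a, (d + a * p); split; rewrite ?rmorphD ?rmorphM ?fa ?fd ?fp //.
    move=> X Y; apply/eqP; rewrite -subr_eq0; apply/eqP.
    by move: gp; rewrite /binform /linform /= => gp; rewrite -[RHS](mul0r (Y ^+ 2)) -gp; ring.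
  exists (- d), (- b); split; rewrite ?rmorphN ?fd ?fb //.
  move=> X Y; move: gp; rewrite /binform /linform /=.
  by rewrite expr1n expr0n /= !mulr0 !addr0 mulr1 => ->; ring.
have [u0|u_neq0] := eqVneq u 0.
  exists (- v), None; split=> // X Y; rewrite gE u0 /linform /=; ring.
exists u, (Some (- (v / u))); split=> [/=|X Y].
  by rewrite rmorphN fmorph_div fu fv.
by rewrite gE /linform /=; field.
Qed.

(* If all phi-fixed roots of g lie in {P, Q}, then g is not identically
   zero: None, Some 0 and Some 1 are three distinct phi-fixed points. *)
Lemma factor_nonzero (phi : {rmorphism K -> K}) a d b c R1 R2 P Q :
  (forall R, fixedpt phi R -> binform a d b (px R) (py R) = 0 -> R = P \/ R = Q) ->
  (forall X Y, binform a d b X Y = c * linform R1 X Y * linform R2 X Y) ->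
  c != 0.
Proof.
move=> roots gE; apply/eqP => c0.
have root R : fixedpt phi R -> R = P \/ R = Q.
  by move=> fR; apply: roots => //; rewrite gE c0 !mul0r.
have o01 : (0 : K) <> 1 by move/eqP; rewrite eq_sym oner_eq0.
move: (root None I) (root (Some 0) (rmorph0 phi)) (root (Some 1) (rmorph1 phi)).
by case=> <- [] e0 [] e1; congruence.
Qed.

Lemma map_px (phi : {rmorphism K -> K}) R : phi (px R) = px (omap phi R).
Proof. by case: R => [p|] /=; rewrite ?rmorph1. Qed.

Lemma map_py (phi : {rmorphism K -> K}) R : phi (py R) = py (omap phi R).
Proof. by case: R => [p|] /=; rewrite ?rmorph1 ?rmorph0. Qed.

Lemma map_linform (phi : {rmorphism K -> K}) R X Y :
  phi (linform R X Y) = linform (omap phi R) (phi X) (phi Y).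
Proof. by rewrite /linform rmorphB !rmorphM map_px map_py. Qed.

Lemma map_binform (phi : {rmorphism K -> K}) a d b X Y :
  phi (binform a d b X Y) = binform (phi a) (phi d) (phi b) (phi X) (phi Y).
Proof. by rewrite /binform !rmorphD !rmorphM ?rmorphXn. Qed.

Lemma map_factor (phi : {rmorphism K -> K}) a d b c R1 R2 :
  (forall X Y, binform a d b X Y = c * linform R1 X Y * linform R2 X Y) ->
  forall X Y, binform (phi a) (phi d) (phi b) X Y =
    phi c * linform (omap phi R1) X Y * linform (omap phi R2) X Y.
Proof.
move=> gE.
have ea : a = c * linform R1 1 0 * linform R2 1 0 by rewrite -gE /binform; ring.
have eb : b = c * linform R1 0 1 * linform R2 0 1 by rewrite -gE /binform; ring.
have ed : d = c * linform R1 1 1 * linform R2 1 1 - a - b by rewrite -gE /binform; ring.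
move=> X Y; rewrite ed ea eb !rmorphB !rmorphM !map_linform rmorph1 rmorph0.
by rewrite /binform /linform; ring.
Qed.

Lemma anisotropic_zero (phi : {rmorphism K -> K}) a d b X Y :
  (forall R, fixedpt phi R -> binform a d b (px R) (py R) != 0) ->
  phi X = X -> phi Y = Y -> binform a d b X Y = 0 -> X = 0 /\ Y = 0.
Proof.
move=> noroot fX fY gXY.
have [Y0|Y_neq0] := eqVneq Y 0.
  split=> //; move: gXY (noroot None I); rewrite Y0 /binform /=.
  rewrite !expr0n /= !mulr0 !addr0 expr1n mulr1 => /eqP.
  by rewrite mulf_eq0 expf_eq0 /= => /orP[->|/eqP].
have fXY : phi (X / Y) = X / Y by rewrite fmorph_div fX fY.
have := noroot (Some (X / Y)) fXY; rewrite /=.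
have -> : binform a d b (X / Y) 1 = binform a d b X Y / Y ^+ 2.
  by rewrite /binform; field.
by rewrite gXY mul0r eqxx.
Qed.

Lemma factor_conjugate_roots (phi : {rmorphism K -> K}) a d b R :
  phi a = a -> phi d = d -> phi b = b ->
  (forall R', fixedpt phi R' -> binform a d b (px R') (py R') != 0) ->
  binform a d b (px R) (py R) = 0 ->
  exists p c, [/\ R = Some p, c != 0 & forall X Y,
    binform a d b X Y = c * linform (Some p) X Y * linform (Some (phi p)) X Y].
Proof.
move=> fa fd fb noroot gR.
case: R gR => [p|] /= gR; last by have := noroot None I; rewrite gR eqxx.
have gp' : binform a d b (phi p) 1 = 0.
  by move: (congr1 phi gR); rewrite map_binform fa fd fb rmorph1 rmorph0.
have pp' : Some p <> Some (phi p).
  by move=> [/esym fp]; have := noroot (Some p) fp; rewrite /= gR eqxx.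
have [c gE] := factor_two_roots pp' gR gp'.
exists p, c; split=> //.
apply: (factor_nonzero (phi := phi) (P := None) (Q := None) _ gE) => R' fR' gR'.
by have := noroot R' fR'; rewrite gR' eqxx.
Qed.

End BinaryForms.

Lemma qeval_lin (L : finFieldType) n (M N : 'I_n -> 'I_n -> L) c v :
  qeval (fun k l => M k l + c * N k l) v = qeval M v + c * qeval N v.
Proof.
rewrite /qeval mulr_sumr -big_split; apply: eq_bigr => i _.
rewrite mulr_sumr -big_split; apply: eq_bigr => j _.
by rewrite /= !mulrDl !mulrA.
Qed.

Lemma qeval_ext (L : finFieldType) n (M N : 'I_n -> 'I_n -> L) v :
  (forall k l, M k l = N k l) -> qeval M v = qeval N v.
Proof. by move=> MN; apply: eq_bigr => i _; apply: eq_bigr => j _; rewrite MN. Qed.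

Definition cx0 : 'I_5 := @Ordinal 5 0 erefl.
Definition cx1 : 'I_5 := @Ordinal 5 1 erefl.
Definition cy0 : 'I_5 := @Ordinal 5 2 erefl.
Definition cy1 : 'I_5 := @Ordinal 5 3 erefl.

Lemma forall_I5 (P : 'I_5 -> Prop) :
  P cx0 -> P cx1 -> P cy0 -> P cy1 -> P cz -> forall i, P i.
Proof.
move=> P0 P1 P2 P3 P4 i.
have -> : i = nth cz [:: cx0; cx1; cy0; cy1; cz] i.
  by apply: ord_inj; case: i => [[|[|[|[|[|]]]]]].
by case: i => [[|[|[|[|[|]]]]]].
Qed.

Lemma sum_tri3 (L : zmodType) (F : 'I_3 -> 'I_3 -> L) :
  \sum_(i < 3) \sum_(j < 3 | (i <= j)%N) F i j =
  F c00 c00 + F c00 c11 + F c00 c22 + F c11 c11 + F c11 c22 + F c22 c22.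
Proof.
have E (i : 'I_3) : i = nth c00 [:: c00; c11; c22] i.
  by apply: val_inj; case: i => [[|[|[|]]]].
pose c := nth c00 [:: c00; c11; c22].
transitivity (\sum_(i < 3) \sum_(j < 3 | (i <= j)%N) F (c i) (c j)).
  by apply: eq_bigr => i _; apply: eq_bigr => j _; rewrite /c -!E.
under eq_bigr => i _ do rewrite big_mkcond.
by rewrite !big_ord_recl !big_ord0 /= /bump /= !addr0 !add0r !addrA.
Qed.

Lemma sum_tri5 (L : zmodType) (F : 'I_5 -> 'I_5 -> L) :
  \sum_(i < 5) \sum_(j < 5 | (i <= j)%N) F i j =
  F cx0 cx0 + F cx0 cx1 + F cx0 cy0 + F cx0 cy1 + F cx0 cz
  + F cx1 cx1 + F cx1 cy0 + F cx1 cy1 + F cx1 cz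
  + F cy0 cy0 + F cy0 cy1 + F cy0 cz + F cy1 cy1 + F cy1 cz + F cz cz.
Proof.
have E (i : 'I_5) : i = nth cx0 [:: cx0; cx1; cy0; cy1; cz] i.
  by apply: val_inj; case: i => [[|[|[|[|[|]]]]]].
pose c := nth cx0 [:: cx0; cx1; cy0; cy1; cz].
transitivity (\sum_(i < 5) \sum_(j < 5 | (i <= j)%N) F (c i) (c j)).
  by apply: eq_bigr => i _; apply: eq_bigr => j _; rewrite /c -!E.
under eq_bigr => i _ do rewrite big_mkcond.
by rewrite !big_ord_recl !big_ord0 /= /bump /= !addr0 !add0r !addrA.
Qed.

Lemma on_line_ext (L : finFieldType) n (u u' w w' v : 'I_n -> L) :
  u =1 u' -> w =1 w' -> (on_line u w v <-> on_line u' w' v).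
Proof. by move=> uu ww; split=> -[l [m vE]]; exists l, m => i; rewrite vE ?uu ?ww. Qed.

Lemma on_line_sym (L : finFieldType) n (u w v : 'I_n -> L) : on_line u w v <-> on_line w u v.
Proof. by split=> -[l [m vE]]; exists m, l => i; rewrite vE addrC. Qed.

(* Distributing a product of two disjunctions into four cases, listed in
   the two orders in which the lines of parts (1) and (3) occur. *)
Lemma or_cross (Z A1 A2 B1 B2 S1 S2 S3 S4 : Prop) :
  (S1 <-> [/\ Z, A1 & B1]) -> (S2 <-> [/\ Z, A2 & B2]) ->
  (S3 <-> [/\ Z, A1 & B2]) -> (S4 <-> [/\ Z, A2 & B1]) ->
  ([/\ Z, A1 \/ A2 & B1 \/ B2] <-> [\/ S1, S2, S3 | S4]).
Proof.
move=> [f1 e1] [f2 e2] [f3 e3] [f4 e4]; split.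
  case=> z [a|a] [b|b].
  - by apply: Or41; apply: e1.
  - by apply: Or43; apply: e3.
  - by apply: Or44; apply: e4.
  - by apply: Or42; apply: e2.
by move=> [/f1|/f2|/f3|/f4] [z a b]; split=> //; tauto.
Qed.

Lemma or_cycle (Z A1 A2 B1 B2 S1 S2 S3 S4 : Prop) :
  (S1 <-> [/\ Z, A1 & B1]) -> (S2 <-> [/\ Z, A2 & B1]) ->
  (S3 <-> [/\ Z, A2 & B2]) -> (S4 <-> [/\ Z, A1 & B2]) ->
  ([/\ Z, A1 \/ A2 & B1 \/ B2] <-> [\/ S1, S2, S3 | S4]).
Proof.
move=> [f1 e1] [f2 e2] [f3 e3] [f4 e4]; split.
  case=> z [a|a] [b|b].
  - by apply: Or41; apply: e1.
  - by apply: Or44; apply: e4.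
  - by apply: Or42; apply: e2.
  - by apply: Or43; apply: e3.
by move=> [/f1|/f2|/f3|/f4] [z a b]; split=> //; tauto.
Qed.

Section Frobenius.
Variables (L : finFieldType) (q : nat).
Hypotheses (q_gt1 : (1 < q)%N) (card_L : #|L| = (q ^ 4)%N).

Definition frobq (k : nat) (x : L) : L := x ^+ (q ^ k)%N.

(* q^k is a power of the characteristic, as #|L| = q^4. *)
Lemma frobq_is_nmod k : nmod_morphism (frobq k).
Proof.
have [p p_pr pcharL] := finPcharP L.
have q_nat : [pchar L].-nat (q ^ k)%N.
  have : [pchar L].-nat #|L|.
    by rewrite (card_pprimeChar pcharL) pnatX (eq_pnat _ (pcharf_eq pcharL)) pnat_id.
  by rewrite card_L !pnatX orbF => ->.
split=> [|x y]; last by rewrite /frobq exprDn_pchar.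
by rewrite /frobq expr0n expn_eq0; case: q q_gt1.
Qed.

Lemma frobq_is_monoid k : monoid_morphism (frobq k).
Proof. by split=> [|x y]; rewrite /frobq ?expr1n ?exprMn. Qed.

HB.instance Definition _ k := GRing.isNmodMorphism.Build L L (frobq k) (frobq_is_nmod k).
HB.instance Definition _ k := GRing.isMonoidMorphism.Build L L (frobq k) (frobq_is_monoid k).

Lemma frobq1 x : frobq 1 x = x ^+ q.
Proof. by rewrite /frobq expn1. Qed.

Lemma frobq_comp j k x : frobq j (frobq k x) = frobq (k + j) x.
Proof. by rewrite /frobq -exprM -expnD. Qed.

Lemma frobq4 x : frobq 4 x = x.
Proof. by rewrite /frobq -card_L expf_card. Qed.

Lemma omap_frobq4 (R : option L) : omap (frobq 4) R = R.
Proof. by case: R => [x|] //=; rewrite frobq4. Qed.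

Section BruckBose.
Variables (tau t0 t1 : L).
Local Notation s := (frobq 1 tau).
Hypothesis tau_neq_s : tau != s.

(* With t = tau and t = tau^q this is an
   invertible change of coordinates over F_{q^2}; the transversal g is
   X(tau^q) = Y(tau^q) = 0 and g^q is X(tau) = Y(tau) = 0. *)
Definition bbX (t : L) (v : 'I_5 -> L) : L := v cx0 + v cx1 * t.
Definition bbY (t : L) (v : 'I_5 -> L) : L := v cy0 + v cy1 * t.

Lemma bb_coords_inj u v : u cz = v cz ->
  bbX tau u = bbX tau v -> bbY tau u = bbY tau v ->
  bbX s u = bbX s v -> bbY s u = bbY s v -> forall i, u i = v i.
Proof.
have solve2 (a b c d : L) :
    a + b * tau = c + d * tau -> a + b * s = c + d * s -> a = c /\ b = d.
  move=> e1 e2; have bd : b = d.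
    have : (b - d) * (tau - s) = 0.
      have -> : (b - d) * (tau - s) =
        (a + b * tau - (c + d * tau)) - (a + b * s - (c + d * s)) by ring.
      by rewrite e1 e2 !subrr.
    by move/eqP; rewrite mulf_eq0 !subr_eq0 (negbTE tau_neq_s) orbF => /eqP.
  by split=> //; move: e1; rewrite bd => /addIr.
rewrite /bbX /bbY => ez eX eY eX' eY'.
have [e0 e1] := solve2 _ _ _ _ eX eX'.
have [e2 e3] := solve2 _ _ _ _ eY eY'.
exact: forall_I5.
Qed.

Lemma bb_coords_zero v : v cz = 0 ->
  bbX tau v = 0 -> bbY tau v = 0 -> bbX s v = 0 -> bbY s v = 0 -> forall i, v i = 0.
Proof.
have zero_coords t : bbX t (fun=> 0) = 0 /\ bbY t (fun=> 0) = 0.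
  by rewrite /bbX /bbY mul0r addr0.
move=> ez eX eY eX' eY'; apply: (@bb_coords_inj v (fun=> 0)) => //.
- by rewrite eX (zero_coords tau).1.
- by rewrite eY (zero_coords tau).2.
- by rewrite eX' (zero_coords s).1.
- by rewrite eY' (zero_coords s).2.
Qed.

Lemma on_lineE u w v : on_line u w v <-> exists l m,
  [/\ v cz = l * u cz + m * w cz,
      bbX tau v = l * bbX tau u + m * bbX tau w,
      bbY tau v = l * bbY tau u + m * bbY tau w,
      bbX s v = l * bbX s u + m * bbX s w
    & bbY s v = l * bbY s u + m * bbY s w].
Proof.
split=> [[l [m vE]]|[l [m [ez eX eY eX' eY']]]]; exists l, m.
  by rewrite /bbX /bbY !vE; split; ring.
move=> i; apply: (@bb_coords_inj v (fun i => l * u i + m * w i)) => //;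
  rewrite /bbX /bbY in eX eY eX' eY' *;
  by rewrite ?eX ?eY ?eX' ?eY'; ring.
Qed.

(* The point of a transversal with parameter R: for t = tau^q it is the
   point gpt R of g, for t = tau it is the point (gpt R')^q of g^q, where
   R = R'^q. *)
Definition transv (t : L) (R : option L) (i : 'I_5) : L :=
  match nat_of_ord i with
  | 0 => px R * t | 1 => - px R | 2 => py R * t | 3 => - py R | _ => 0
  end.

Lemma transv_coords t t' R : [/\ transv t R cz = 0,
  bbX t' (transv t R) = (t - t') * px R & bbY t' (transv t R) = (t - t') * py R].
Proof. by rewrite /bbX /bbY /transv /=; split; ring. Qed.

Lemma gpt_transv R : gpt q tau R =1 transv s R.
Proof.
rewrite frobq1 => i; rewrite /gpt /transv /A0 /A1.
by case: R => [a|]; case: (nat_of_ord i) => [|[|[|[|n]]]] /=; ring.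
Qed.

Lemma frobq_transv k t R i :
  frobq k (transv t R i) = transv (frobq k t) (omap (frobq k) R) i.
Proof.
rewrite /transv; case: (nat_of_ord i) => [|[|[|[|n]]]];
  by rewrite ?rmorphM ?rmorphN ?rmorph0 ?map_px ?map_py.
Qed.

Lemma frobv_gpt k R :
  frobv q k (gpt q tau R) =1 transv (frobq k.+1 tau) (omap (frobq k) R).
Proof.
move=> i; rewrite /frobv -[_ ^+ _]/(frobq k _) gpt_transv frobq_transv.
by rewrite frobq_comp.
Qed.

Lemma transv_lineE R1 R2 v : on_line (transv s R1) (transv tau R2) v <->
  [/\ v cz = 0, linform R1 (bbX tau v) (bbY tau v) = 0
    & linform R2 (bbX s v) (bbY s v) = 0].
Proof.
have [z1 X1 Y1] := transv_coords s tau R1; have [_ X1' Y1'] := transv_coords s s R1.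
have [z2 X2 Y2] := transv_coords tau tau R2; have [_ X2' Y2'] := transv_coords tau s R2.
rewrite on_lineE z1 z2 X1 Y1 X1' Y1' X2 Y2 X2' Y2' !subrr.
split=> [[l [m [-> -> -> -> ->]]]|[ez]]; first by split; unfold linform; ring.
move=> /linform_eq0_span[a [eX eY]] /linform_eq0_span[b [eX' eY']].
have st : s - tau != 0 by rewrite subr_eq0 eq_sym.
have ts : tau - s != 0 by rewrite subr_eq0.
exists (a / (s - tau)), (b / (tau - s)).
by rewrite ez eX eY eX' eY'; split; field; rewrite ts st.
Qed.

Hypotheses (t0_Fq : frobq 1 t0 = t0) (t1_Fq : frobq 1 t1 = t1).
Hypothesis tau_min : tau ^+ 2 = t1 * tau + t0.

Lemma s_min : s ^+ 2 = t1 * s + t0.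
Proof. by rewrite -rmorphXn tau_min rmorphD rmorphM /= t0_Fq t1_Fq. Qed.

Lemma reF_imF c :
  reF q tau c + imF q tau c * tau = c /\ reF q tau c + imF q tau c * s = frobq 1 c.
Proof. by rewrite /reF /imF -!frobq1; split; field; rewrite subr_eq0. Qed.

Lemma spread_u_coords R : [/\ spread_u q tau R cz = 0,
  bbX tau (spread_u q tau R) = px R, bbY tau (spread_u q tau R) = py R,
  bbX s (spread_u q tau R) = px (omap (frobq 1) R)
  & bbY s (spread_u q tau R) = py (omap (frobq 1) R)].
Proof.
rewrite /bbX /bbY; case: R => [d|] /=; last by split; ring.
by have [e e'] := reF_imF d; split; rewrite ?e ?e' //; ring.
Qed.

Lemma spread_w_coords t R : t ^+ 2 = t1 * t + t0 ->
  [/\ spread_w q tau t0 t1 R cz = 0,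
      bbX t (spread_w q tau t0 t1 R) = t * bbX t (spread_u q tau R)
    & bbY t (spread_w q tau t0 t1 R) = t * bbY t (spread_u q tau R)].
Proof.
move=> t_min; have t0E : t0 = t ^+ 2 - t1 * t by rewrite t_min; ring.
by rewrite /bbX /bbY; case: R => [d|] /=; rewrite ?t0E; split; ring.
Qed.

Lemma spread_lineE R v : on_spread q tau t0 t1 R v <->
  [/\ v cz = 0, linform R (bbX tau v) (bbY tau v) = 0
    & linform (omap (frobq 1) R) (bbX s v) (bbY s v) = 0].
Proof.
have [zu Xu Yu Xu' Yu'] := spread_u_coords R.
have [zw Xw Yw] := spread_w_coords R tau_min.
have [_ Xw' Yw'] := spread_w_coords R s_min.
rewrite /on_spread on_lineE zu zw Xw Yw Xw' Yw' Xu Yu Xu' Yu'.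
split=> [[l [m [-> -> -> -> ->]]]|[ez]]; first by split; unfold linform; ring.
move=> /linform_eq0_span[a [eX eY]] /linform_eq0_span[b [eX' eY']].
have ts : tau - s != 0 by rewrite subr_eq0.
exists ((b * tau - a * s) / (tau - s)), ((a - b) / (tau - s)).
by rewrite ez eX eY eX' eY'; split; field; rewrite ts.
Qed.

(* The restriction f(X, Y, 0) of the conic with table A to ell_inf. *)
Definition ginf (A : 'I_3 -> 'I_3 -> L) : L -> L -> L :=
  binform (A c00 c00) (A c00 c11) (A c11 c11).

Lemma onOE A R : onO A R <-> ginf A (px R) (py R) = 0.
Proof.
rewrite /onO; suff -> : qeval A (linf_pt R) = ginf A (px R) (py R) by [].
by rewrite /qeval sum_tri3 /ginf /binform; case: R => [x|] /=; ring.
Qed.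

Lemma qeval_BB (M : 'I_3 -> 'I_3 -> L) t v : v cz = 0 ->
  qeval (qsubst M (BBsubst t)) v = ginf M (bbX t v) (bbY t v).
Proof.
move=> vz; rewrite /qeval sum_tri5 /qsubst /= !sum_tri3 /= vz /BBsubst /=.
by rewrite /ginf /binform /bbX /bbY; ring.
Qed.

Lemma map_qsubst M k l : frobq 1 (qsubst M (BBsubst tau) k l) =
  qsubst (fun i j => frobq 1 (M i j)) (BBsubst s) k l.
Proof.
have map_BB i j : frobq 1 (BBsubst tau i j) = BBsubst s i j.
  by rewrite /BBsubst; case: (nat_of_ord i) (nat_of_ord j) =>
    [|[|[|?]]] [|[|[|[|[|?]]]]]; rewrite ?rmorph0 ?rmorph1.
rewrite /qsubst; case: ifP => _; [|case: ifP => _]; rewrite ?rmorph0 // rmorph_sum;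
  apply: eq_bigr => i _; rewrite rmorph_sum; apply: eq_bigr => j _;
  by rewrite !rmorphM ?rmorphD ?rmorphM /= !map_BB.
Qed.

(* Since f = f_inf + tau f_0 and f^q = f_inf + tau^q f_0 (on F_q-coordinates)
   and tau != tau^q: a point of Sigma_inf is on Q_inf and Q_0 iff
   ginf(X(tau), Y(tau)) = 0 and ginf^q(X(tau^q), Y(tau^q)) = 0. *)
Lemma inBBOE A v : v cz = 0 -> (inBBO q tau A v <->
  ginf A (bbX tau v) (bbY tau v) = 0 /\
  ginf (fun i j => frobq 1 (A i j)) (bbX s v) (bbY s v) = 0).
Proof.
move=> vz.
have E1 : qeval (finf q tau A) v + tau * qeval (f0 q tau A) v =
    ginf A (bbX tau v) (bbY tau v).
  rewrite -qeval_lin -qeval_BB //; apply: qeval_ext => k l.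
  by rewrite /finf /f0 mulrC (reF_imF _).1.
have E2 : qeval (finf q tau A) v + s * qeval (f0 q tau A) v =
    ginf (fun i j => frobq 1 (A i j)) (bbX s v) (bbY s v).
  rewrite -qeval_lin -qeval_BB //; apply: qeval_ext => k l.
  by rewrite /finf /f0 mulrC (reF_imF _).2 map_qsubst.
rewrite /inBBO -E1 -E2; split=> [[-> ->]|[e1 e2]]; first by split; rewrite mulr0 addr0.
move: e1 e2; set Qinf := qeval _ v; set Q0 := qeval _ v => e1 e2.
have f0v : Q0 = 0.
  have : (tau - s) * Q0 = 0.
    have -> : (tau - s) * Q0 = (Qinf + tau * Q0) - (Qinf + s * Q0) by ring.
    by rewrite e1 e2 subrr.
  by move/eqP; rewrite mulf_eq0 subr_eq0 (negbTE tau_neq_s) => /eqP.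
by split=> //; move: e1; rewrite f0v mulr0 addr0.
Qed.

Lemma sigma_inf_factor A R1 R2 c v : c != 0 ->
  (forall X Y, ginf A X Y = c * linform R1 X Y * linform R2 X Y) ->
  (inBBO q tau A v /\ inSigmaInf v <->
   [/\ v cz = 0,
       linform R1 (bbX tau v) (bbY tau v) = 0 \/ linform R2 (bbX tau v) (bbY tau v) = 0
     & linform (omap (frobq 1) R1) (bbX s v) (bbY s v) = 0 \/
       linform (omap (frobq 1) R2) (bbX s v) (bbY s v) = 0]).
Proof.
move=> c_neq0 gE.
have gE' := map_factor (frobq 1) gE.
have c'_neq0 : frobq 1 c != 0 by rewrite fmorph_eq0.
rewrite /inSigmaInf; split=> [[vO vz]|[vz l1 l2]].
  move: vO => /(inBBOE A vz) [g1 g2]; split=> //.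
    exact/(factor_eq0 _ _ c_neq0 gE).
  exact/(factor_eq0 _ _ c'_neq0 gE').
split=> //; apply/(inBBOE A vz); split.
  exact/(factor_eq0 _ _ c_neq0 gE).
exact/(factor_eq0 _ _ c'_neq0 gE').
Qed.

Lemma Fq_point_coords v : (forall i, frobq 1 (v i) = v i) ->
  bbX s v = frobq 1 (bbX tau v) /\ bbY s v = frobq 1 (bbY tau v).
Proof. by move=> fv; rewrite /bbX /bbY !rmorphD !rmorphM /= !fv. Qed.

Lemma cross_line_Fq R1 R2 v : R1 <> R2 -> (forall i, frobq 1 (v i) = v i) ->
  v cz = 0 -> linform R1 (bbX tau v) (bbY tau v) = 0 ->
  linform (omap (frobq 1) R2) (bbX s v) (bbY s v) = 0 -> forall i, v i = 0.
Proof.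
move=> R12 fv vz l1; have [eX eY] := Fq_point_coords fv.
rewrite eX eY -map_linform => /eqP; rewrite fmorph_eq0 => /eqP l2.
have [X0 Y0] := linform_zero2 R12 l1 l2.
by apply: bb_coords_zero; rewrite ?eX ?eY ?X0 ?Y0 ?rmorph0.
Qed.

Hypothesis tau_Fq2 : frobq 2 tau = tau.

Lemma frobq3_tau : frobq 3 tau = s.
Proof. by rewrite -(frobq_comp 1 2) tau_Fq2. Qed.

Lemma frobq5_tau : frobq 5 tau = s.
Proof. by rewrite -(frobq_comp 1 4) frobq4. Qed.

Lemma anisotropic_points A v :
  (forall R, fixedpt (frobq 2) R -> ginf A (px R) (py R) != 0) ->
  frobq 2 (A c00 c00) = A c00 c00 -> frobq 2 (A c00 c11) = A c00 c11 ->
  frobq 2 (A c11 c11) = A c11 c11 ->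
  (forall i, frobq 2 (v i) = v i) -> v cz = 0 -> inBBO q tau A v ->
  forall i, v i = 0.
Proof.
move=> noroot fa fd fb fv vz /(inBBOE A vz) [g1 g2].
have fixed2 t : frobq 2 t = t -> frobq 2 (bbX t v) = bbX t v /\ frobq 2 (bbY t v) = bbY t v.
  by move=> ft; rewrite /bbX /bbY !rmorphD !rmorphM /= !fv ft.
have s_Fq2 : frobq 2 s = s by rewrite frobq_comp frobq3_tau.
have [fX fY] := fixed2 _ tau_Fq2; have [fX' fY'] := fixed2 _ s_Fq2.
have [X0 Y0] := anisotropic_zero noroot fX fY g1.
(* (X', Y') is the q-th power of an F_{q^2}-rational zero of ginf *)
move: fX' fY' g2; set X' := bbX s v; set Y' := bbY s v => fX' fY'.
have conjE x : frobq 2 x = x -> x = frobq 1 (frobq 1 x) by rewrite frobq_comp => ->.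
rewrite [X in ginf _ X](conjE _ fX') [X in ginf _ _ X](conjE _ fY').
rewrite /ginf -map_binform => /eqP; rewrite fmorph_eq0 => /eqP g2.
have fixed_conj x : frobq 2 x = x -> frobq 2 (frobq 1 x) = frobq 1 x.
  by move=> fx; rewrite frobq_comp -(frobq_comp 1 2) fx.
have [X0' Y0'] := anisotropic_zero noroot (fixed_conj _ fX') (fixed_conj _ fY') g2.
have conj0 x : frobq 1 x = 0 -> x = 0.
  by move=> x0; apply: (fmorph_inj (frobq 1)); rewrite /= x0 rmorph0.
exact: bb_coords_zero vz X0 Y0 (conj0 _ X0') (conj0 _ Y0').
Qed.

Lemma cross_lineE R1 R2 v :
  on_line (gpt q tau R1) (frobv q 1 (gpt q tau R2)) v <->
  [/\ v cz = 0, linform R1 (bbX tau v) (bbY tau v) = 0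
    & linform (omap (frobq 1) R2) (bbX s v) (bbY s v) = 0].
Proof. by rewrite (on_line_ext _ (gpt_transv R1) (frobv_gpt 1 R2)) tau_Fq2 transv_lineE. Qed.

(* Part (1): two points at infinity; over F_q the two lines P Q^q and P^q Q
   contribute nothing. *)
Lemma part1 A P Q : opt_inF q 2 P -> opt_inF q 2 Q -> P <> Q ->
  (forall X, opt_inF q 2 X -> (onO A X <-> X = P \/ X = Q)) ->
  (forall v, ptPG q 1 v ->
     (inBBO q tau A v /\ inSigmaInf v <->
      on_spread q tau t0 t1 P v \/ on_spread q tau t0 t1 Q v)) /\
  (forall v, ptPG q 2 v ->
     (inBBO q tau A v /\ inSigmaInf v <->
      [\/ on_spread q tau t0 t1 P v, on_spread q tau t0 t1 Q v,
          on_line (gpt q tau P) (frobv q 1 (gpt q tau Q)) v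
        | on_line (frobv q 1 (gpt q tau P)) (gpt q tau Q) v])) /\
  (forall v, ptPG q 4 v ->
     (inBBO q tau A v /\ inSigmaInf v <->
      [\/ on_spread q tau t0 t1 P v, on_spread q tau t0 t1 Q v,
          on_line (gpt q tau P) (frobv q 1 (gpt q tau Q)) v
        | on_line (frobv q 1 (gpt q tau P)) (gpt q tau Q) v])).
Proof.
move=> fP fQ PQ roots.
have [c gE] : exists c, forall X Y, ginf A X Y = c * linform P X Y * linform Q X Y.
  by apply: factor_two_roots => //; apply/onOE/roots => //; [left|right].
have c_neq0 : c != 0.
  by apply: (factor_nonzero (phi := frobq 2) (P := P) (Q := Q) _ gE) => R fR /onOE /(roots R fR).
have QP : Q <> P by move/esym.
have lines v : inBBO q tau A v /\ inSigmaInf v <->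
    [\/ on_spread q tau t0 t1 P v, on_spread q tau t0 t1 Q v,
        on_line (gpt q tau P) (frobv q 1 (gpt q tau Q)) v
      | on_line (frobv q 1 (gpt q tau P)) (gpt q tau Q) v].
  rewrite (sigma_inf_factor _ c_neq0 gE); apply: or_cross.
  - exact: spread_lineE.
  - exact: spread_lineE.
  - exact: cross_lineE.
  - rewrite on_line_sym; exact: cross_lineE.
split; [|split]; last by move=> v _; exact: lines.
- move=> v [[i vi] fv]; rewrite lines; split; last by case=> ?; [apply: Or41|apply: Or42].
  case=> [||/cross_lineE [vz l1 l2]|]; [by left | by right | |].
  + by move: vi; rewrite (cross_line_Fq PQ fv vz l1 l2 i) eqxx.
  + rewrite on_line_sym => /cross_lineE [vz l1 l2].
    by move: vi; rewrite (cross_line_Fq QP fv vz l1 l2 i) eqxx.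
- by move=> v _; exact: lines.
Qed.

(* Part (2): ell_inf is tangent, g = c l_P^2 and only the spread line [P]
   remains. *)
Lemma part2 A P :
  frobq 2 (A c00 c00) = A c00 c00 -> frobq 2 (A c00 c11) = A c00 c11 ->
  frobq 2 (A c11 c11) = A c11 c11 ->
  opt_inF q 2 P -> (forall X, opt_inF q 2 X -> (onO A X <-> X = P)) ->
  (forall v, ptPG q 1 v ->
     (inBBO q tau A v /\ inSigmaInf v <-> on_spread q tau t0 t1 P v)) /\
  (forall v, ptPG q 2 v ->
     (inBBO q tau A v /\ inSigmaInf v <-> on_spread q tau t0 t1 P v)) /\
  (forall v, ptPG q 4 v ->
     (inBBO q tau A v /\ inSigmaInf v <-> on_spread q tau t0 t1 P v)).
Proof.
move=> fa fd fb fP roots.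
have rootP : ginf A (px P) (py P) = 0 by apply/onOE/roots.
have [c [R' [fR' gE]]] := factor_at_root fa fd fb fP rootP.
have R'P : R' = P by apply/(roots R' fR')/onOE; rewrite /ginf gE linform_self mulr0.
have c_neq0 : c != 0.
  apply: (factor_nonzero (phi := frobq 2) (P := P) (Q := P) _ gE) => R fR.
  by move=> /onOE /(roots R fR) ->; left.
have tangent v : inBBO q tau A v /\ inSigmaInf v <-> on_spread q tau t0 t1 P v.
  rewrite (sigma_inf_factor _ c_neq0 gE) R'P spread_lineE.
  by split=> [[vz [] l1 [] l2]|[vz l1 l2]]; split=> //; left.
by split; [|split] => v _; exact: tangent.
Qed.

(* Part (3): no point at infinity over F_{q^2}; the conjugate roots P and
   P^(q^2) give the cycle of four lines P^(q^i) P^(q^(i+1)). *)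
Lemma part3 A P :
  frobq 2 (A c00 c00) = A c00 c00 -> frobq 2 (A c00 c11) = A c00 c11 ->
  frobq 2 (A c11 c11) = A c11 c11 ->
  (forall X, opt_inF q 2 X -> ~ onO A X) -> onO A P ->
  (forall v, ptPG q 1 v -> ~ (inBBO q tau A v /\ inSigmaInf v)) /\
  (forall v, ptPG q 2 v -> ~ (inBBO q tau A v /\ inSigmaInf v)) /\
  (forall v, ptPG q 4 v ->
     (inBBO q tau A v /\ inSigmaInf v <->
      [\/ on_line (gpt q tau P) (frobv q 1 (gpt q tau P)) v,
          on_line (frobv q 1 (gpt q tau P)) (frobv q 2 (gpt q tau P)) v,
          on_line (frobv q 2 (gpt q tau P)) (frobv q 3 (gpt q tau P)) v
        | on_line (frobv q 3 (gpt q tau P)) (frobv q 4 (gpt q tau P)) v])).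
Proof.
move=> fa fd fb noroot PO.
have noroot' R : fixedpt (frobq 2) R -> ginf A (px R) (py R) != 0.
  by move=> fR; apply/eqP => /onOE; apply: noroot.
have no_points k v : (forall i, frobq 2 (v i) = v i) -> ptPG q k v ->
    ~ (inBBO q tau A v /\ inSigmaInf v).
  move=> fv [[i vi] _] [vO vz].
  by move: vi; rewrite (anisotropic_points noroot' fa fd fb fv vz vO) eqxx.
split; [|split].
- move=> v vP; apply: (no_points 1 v _ vP) => i.
  have fq j : frobq 1 (v j) = v j := proj2 vP j.
  by rewrite -(frobq_comp 1 1) !fq.
- by move=> v vP; apply: (no_points 2 v _ vP); exact: (proj2 vP).
have [p [c [-> c_neq0 gE]]] := factor_conjugate_roots fa fd fb noroot' (proj1 (onOE A P) PO).
move=> v _; rewrite (sigma_inf_factor _ c_neq0 gE) /= frobq_comp; apply: or_cycle.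
- exact: cross_lineE.
- rewrite (on_line_ext _ (frobv_gpt 1 _) (frobv_gpt 2 _)) tau_Fq2 frobq3_tau.
  by rewrite on_line_sym transv_lineE.
- rewrite (on_line_ext _ (frobv_gpt 2 _) (frobv_gpt 3 _)) frobq3_tau frobq4.
  by rewrite transv_lineE.
- rewrite (on_line_ext _ (frobv_gpt 3 _) (frobv_gpt 4 _)) frobq4 frobq5_tau.
  by rewrite omap_frobq4 on_line_sym transv_lineE.
Qed.

End BruckBose.
End Frobenius.

Lemma primitive_root_not_Fq (R : idomainType) (q : nat) (x : R) :
  (1 < q)%N -> (q ^ 2 - 1)%N.-primitive_root x -> x != x ^+ q.
Proof.
move=> q_gt1 prim; have n_gt0 := prim_order_gt0 prim.
have x_neq0 : x != 0.
  apply/eqP => x0; have := prim_expr_order prim; rewrite x0 expr0n.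
  by move: n_gt0; rewrite lt0n => /negbTE -> /eqP; rewrite eq_sym oner_eq0.
apply/eqP => xq.
have : x ^+ q.-1 = 1.
  by apply: (mulIf x_neq0); rewrite mul1r -exprSr prednK ?(ltnW q_gt1) // -xq.
move/eqP; rewrite -(prim_order_dvd prim) => /dvdn_leq.
rewrite -[(q ^ 2)%N]/(q * q)%N; nia.
Qed.
Theorem theorem4p3 (L : finFieldType) (q : nat) (tau t0 t1 : L)
  (A : 'I_3 -> 'I_3 -> L) :
  (1 < q)%N -> #|L| = (q ^ 4)%N ->
  (* tau is a primitive element of F_{q^2} with minimal polynomial
     x^2 - t1 x - t0 over F_q *)
  inF q 2 tau -> (q ^ 2 - 1)%N.-primitive_root tau ->
  inF q 1 t0 -> inF q 1 t1 -> tau ^+ 2 = t1 * tau + t0 ->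
  (* O : f = 0 is a non-degenerate conic of PG(2,q^2) *)
  (forall i j : 'I_3, (i <= j)%N -> inF q 2 (A i j)) ->
  nondeg_conic A ->
  (* (1) *)
  (forall P Q : option L,
     opt_inF q 2 P -> opt_inF q 2 Q -> P <> Q ->
     (forall X, opt_inF q 2 X -> (onO A X <-> X = P \/ X = Q)) ->
     (forall v, ptPG q 1 v ->
        (inBBO q tau A v /\ inSigmaInf v <->
         on_spread q tau t0 t1 P v \/ on_spread q tau t0 t1 Q v)) /\
     (forall v, ptPG q 2 v ->
        (inBBO q tau A v /\ inSigmaInf v <->
         [\/ on_spread q tau t0 t1 P v, on_spread q tau t0 t1 Q v,
             on_line (gpt q tau P) (frobv q 1 (gpt q tau Q)) v
           | on_line (frobv q 1 (gpt q tau P)) (gpt q tau Q) v])) /\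
     (forall v, ptPG q 4 v ->
        (inBBO q tau A v /\ inSigmaInf v <->
         [\/ on_spread q tau t0 t1 P v, on_spread q tau t0 t1 Q v,
             on_line (gpt q tau P) (frobv q 1 (gpt q tau Q)) v
           | on_line (frobv q 1 (gpt q tau P)) (gpt q tau Q) v]))) /\
  (* (2) *)
  (forall P : option L,
     opt_inF q 2 P ->
     (forall X, opt_inF q 2 X -> (onO A X <-> X = P)) ->
     (forall v, ptPG q 1 v ->
        (inBBO q tau A v /\ inSigmaInf v <-> on_spread q tau t0 t1 P v)) /\
     (forall v, ptPG q 2 v ->
        (inBBO q tau A v /\ inSigmaInf v <-> on_spread q tau t0 t1 P v)) /\
     (forall v, ptPG q 4 v ->
        (inBBO q tau A v /\ inSigmaInf v <-> on_spread q tau t0 t1 P v))) /\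
  (* (3) *)
  (forall P : option L,
     (forall X, opt_inF q 2 X -> ~ onO A X) ->
     onO A P ->
     (forall v, ptPG q 1 v -> ~ (inBBO q tau A v /\ inSigmaInf v)) /\
     (forall v, ptPG q 2 v -> ~ (inBBO q tau A v /\ inSigmaInf v)) /\
     (forall v, ptPG q 4 v ->
        (inBBO q tau A v /\ inSigmaInf v <->
         [\/ on_line (gpt q tau P) (frobv q 1 (gpt q tau P)) v,
             on_line (frobv q 1 (gpt q tau P)) (frobv q 2 (gpt q tau P)) v,
             on_line (frobv q 2 (gpt q tau P)) (frobv q 3 (gpt q tau P)) v
           | on_line (frobv q 3 (gpt q tau P)) (frobv q 4 (gpt q tau P)) v]))).
Proof.
move=> q_gt1 card_L tau_Fq2 prim t0_Fq t1_Fq tau_min A_Fq2 _.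
have tau_neq_s : tau != frobq q 1 tau by rewrite frobq1 primitive_root_not_Fq.
have fa := A_Fq2 c00 c00 isT; have fd := A_Fq2 c00 c11 isT; have fb := A_Fq2 c11 c11 isT.
split; [|split].
- by move=> P Q fP fQ PQ roots; exact (part1 q_gt1 card_L tau_neq_s t0_Fq t1_Fq tau_min tau_Fq2 fP fQ PQ roots).
- by move=> P fP roots; exact (part2 q_gt1 card_L tau_neq_s t0_Fq t1_Fq tau_min fa fd fb fP roots).
- by move=> P noroot PO; exact (part3 q_gt1 card_L tau_neq_s tau_Fq2 fa fd fb noroot PO).
Qed.
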